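(* Let $X$ be a locally compact Hausdorff space, let $\mathcal H = \{H_x\}_{x \in X}$ be a continuous field of Hilbert spaces over $X$, and let $\mathcal M = C_0(X, \mathcal H)$ be the Hilbert $C_0(X)$-module of its continuous sections vanishing at infinity. Let $\mathcal N \subset \mathcal M$ be a closed submodule and for $x \in X$ let $L_x = \overline{\{ n(x) \mid n \in \mathcal N\}} \subset H_x$. Then $\mathcal N$ is an essential submodule of $\mathcal M$ if and only if for every $m \in \mathcal M$ the set $Y_m = \{ x \in X \mid m(x) \notin L_x \}$ is nowhere dense in $X$.
   Context: $\mathcal M$ carries the $C_0(X)$-valued inner product $\langle m, m'\rangle(x) = \langle m(x), m'(x)\rangle_{H_x}$ and the right action $(ma)(x) = m(x)a(x)$. A closed submodule $\mathcal N \subset \mathcal M$ is essential if for every nonzero (not necessarily closed) submodule $\mathcal K \subset \mathcal M$ (a linear subspace with $\mathcal K\, C_0(X) \subset \mathcal K$) one has $\mathcal N \cap \mathcal K \neq \{0\}$. *)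

From HB Require Import structures.
From mathcomp Require Import all_boot all_order all_algebra.
From mathcomp Require Import all_classical all_reals all_analysis.
From mathcomp Require Import complex.
Set Implicit Arguments. Unset Strict Implicit. Unset Printing Implicit Defensive.
Import Order.TTheory GRing.Theory Num.Theory.
Import numFieldNormedType.Exports.
Local Open Scope classical_set_scope.
Local Open Scope ring_scope.

Record hilbert (R : realType) := Hilbert {
  hcarrier :> lmodType R[i];
  hip : hcarrier -> hcarrier -> R[i];
  (* inner product: linear in the first, conjugate-linear in the second variable *)
  hip_linear : forall (a : R[i]) (u v w : hcarrier),
      hip (a *: u + v) w = a * hip u w + hip v w;
  hip_conj : forall u v : hcarrier, hip u v = (hip v u)^*;
  hip_ge0 : forall u : hcarrier, 0 <= hip u u;
  hip_eq0 : forall u : hcarrier, hip u u = 0 -> u = 0;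
  hip_complete : forall s : nat -> hcarrier,
      (forall e : R, 0 < e -> exists N : nat, forall m n : nat, (N <= m)%N -> (N <= n)%N ->
          Num.sqrt (complex.Re (hip (s m - s n) (s m - s n))) < e) ->
      exists l : hcarrier, forall e : R, 0 < e -> exists N : nat, forall n : nat, (N <= n)%N ->
          Num.sqrt (complex.Re (hip (s n - l) (s n - l))) < e
}.

Definition hnorm (R : realType) (H : hilbert R) (u : H) : R :=
  Num.sqrt (complex.Re (hip u u)).

Record cfield (R : realType) (X : topologicalType) := CField {
  fib : X -> hilbert R;
  csec : set (forall x, fib x);
  csec_zero : csec (fun x => 0);
  csec_add : forall s t, csec s -> csec t -> csec (fun x => s x + t x);
  csec_scale : forall (a : R[i]) s, csec s -> csec (fun x => a *: s x);
  csec_dense : forall (x : X) (v : fib x) (e : R), 0 < e ->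
      exists2 s, csec s & hnorm (s x - v) < e;
  csec_normcont : forall s, csec s -> continuous ((fun x => hnorm (s x)) : X -> R);
  csec_local : forall s : (forall x, fib x),
      (forall (x : X) (e : R), 0 < e -> exists2 t, csec t &
          \forall y \near x, hnorm (s y - t y) < e) -> csec s
}.

Definition vanish_at_infty (R : realType) (X : topologicalType) (f : X -> R) : Prop :=
  forall e : R, 0 < e -> exists2 K : set X, compact K & forall x, ~ K x -> f x < e.

(* C_0(X) : continuous complex-valued functions vanishing at infinity
   (continuity of X -> C is continuity of real and imaginary parts;
    the modulus of z is Re `|z|) *)
Definition C0 (R : realType) (X : topologicalType) : set (X -> R[i]) :=
  [set a | continuous ((fun x => complex.Re (a x)) : X -> R) /\ continuous ((fun x => complex.Im (a x)) : X -> R) /\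
           vanish_at_infty (fun x => complex.Re `|a x|)].
Arguments C0 : clear implicits.

Definition C0sec (R : realType) (X : topologicalType) (F : cfield R X)
  : set (forall x, fib F x) :=
  [set m | @csec _ _ F m /\ vanish_at_infty (fun x => hnorm (m x))].
Arguments C0sec {R X} F.

Definition submodule (R : realType) (X : topologicalType) (F : cfield R X)
  (K : set (forall x, fib F x)) : Prop :=
  [/\ K `<=` C0sec F,
      K (fun x => 0),
      (forall m n, K m -> K n -> K (fun x => m x + n x)),
      (forall (c : R[i]) m, K m -> K (fun x => c *: m x)) &
      (forall m a, K m -> C0 R X a -> K (fun x => a x *: m x))].

Definition closed_submodule (R : realType) (X : topologicalType) (F : cfield R X)
  (N : set (forall x, fib F x)) : Prop :=
  submodule N /\
  (forall m, C0sec F m ->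
     (forall e : R, 0 < e -> exists2 n, N n & forall x, hnorm (m x - n x) <= e) ->
     N m).

Definition essential (R : realType) (X : topologicalType) (F : cfield R X)
  (N : set (forall x, fib F x)) : Prop :=
  forall K, submodule K -> (exists2 k, K k & exists x, k x != 0) ->
    exists k, [/\ N k, K k & exists x, k x != 0].

Definition fiber_closure (R : realType) (X : topologicalType) (F : cfield R X)
  (N : set (forall x, fib F x)) (x : X) : set (fib F x) :=
  [set v | forall e : R, 0 < e -> exists2 n, N n & hnorm (n x - v) < e].
Arguments fiber_closure {R X F} N x.

Definition nowhere_dense (X : topologicalType) (Y : set X) : Prop :=
  interior (closure Y) = set0.

From HB Require Import structures.
From mathcomp Require Import all_boot all_order all_algebra.
From mathcomp Require Import all_classical all_reals all_analysis.
From mathcomp Require Import complex.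
From mathcomp Require Import ring lra.
Import Order.TTheory GRing.Theory Num.Theory.
Import numFieldNormedType.Exports.
Local Open Scope classical_set_scope.
Local Open Scope ring_scope.
Set Implicit Arguments. Unset Strict Implicit. Unset Printing Implicit Defensive.

(* If N is essential and the closure of Y_m contained a nonempty open set U,
   cutting m down by a bump function supported in U would give a nonzero
   element of the submodule of sections vanishing off U and pointwise
   proportional to m.  Essentiality puts a nonzero n of N in that submodule,
   and at a point y of Y_m with n(y) <> 0 we get m(y) in C n(y), inside L_y,
   a contradiction.  Conversely, if k is a nonzero element of a submodule K,
   the open set {k <> 0} is not contained in the closure of the nowhere dense
   set Y_k, so it contains the support of a bump function a on which
   k(y) lies in L_y.  Gluing local approximants of k from N with a partition
   of unity shows that a k is a uniform limit of elements of N, so the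
   nonzero section a k lies in N and in K. *)

Section HilbertSpace.
Variables (R : realType) (H : hilbert R).
Implicit Types (u v w : H) (a : R[i]).

Lemma hip0l w : hip 0 w = 0.
Proof.
have := hip_linear 1 (0 : H) 0 w; rewrite scale1r addr0 mul1r => h.
by apply: (@addrI _ (hip 0 w)); rewrite addr0 -h.
Qed.

Lemma hipDl u v w : hip (u + v) w = hip u w + hip v w.
Proof. by have := hip_linear 1 u v w; rewrite scale1r mul1r. Qed.

Lemma hipZl a u w : hip (a *: u) w = a * hip u w.
Proof. by have := hip_linear a u 0 w; rewrite !addr0 hip0l addr0. Qed.

Lemma hip0r w : hip w 0 = 0.
Proof. by rewrite hip_conj hip0l rmorph0. Qed.

Lemma hipDr u v w : hip w (u + v) = hip w u + hip w v.
Proof. by rewrite [LHS]hip_conj hipDl rmorphD [hip w u]hip_conj [hip w v]hip_conj. Qed.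

Lemma hipZr a u w : hip w (a *: u) = a^* * hip w u.
Proof. by rewrite [LHS]hip_conj hipZl rmorphM [hip w u]hip_conj. Qed.

Lemma hip_self u : hip u u = (hnorm u ^+ 2)%:C%C.
Proof.
rewrite /hnorm; have := hip_ge0 u; case: (hip u u) => x y.
by rewrite lecE /= => /andP[/eqP -> x0]; rewrite sqr_sqrtr.
Qed.

Lemma hnorm_ge0 u : 0 <= hnorm u.
Proof. exact: sqrtr_ge0. Qed.

Lemma hnorm0 : hnorm (0 : H) = 0.
Proof. by rewrite /hnorm hip0l sqrtr0. Qed.

Lemma hnorm_eq0 u : (hnorm u == 0) = (u == 0).
Proof.
apply/eqP/eqP => [u0|->]; last exact: hnorm0.
by apply: hip_eq0; rewrite hip_self u0 expr0n.
Qed.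

Lemma hnorm_gt0 u : (0 < hnorm u) = (u != 0).
Proof. by rewrite lt_def hnorm_ge0 hnorm_eq0 andbT. Qed.

Lemma hnorm_sqrDZ u v (t : R) :
  hnorm (u + t%:C%C *: v) ^+ 2 =
  hnorm u ^+ 2 + 2 * t * complex.Re (hip u v) + t ^+ 2 * hnorm v ^+ 2.
Proof.
have /(congr1 (@complex.Re R)) := hip_self (u + t%:C%C *: v); rewrite /= => <-.
rewrite hipDl !hipDr !hipZl !hipZr !hip_self [hip v u]hip_conj.
by case: (hip u v) => x y /=; simpc; ring.
Qed.

Lemma hnormZ a u : hnorm (a *: u) = complex.Re `|a| * hnorm u.
Proof.
rewrite /hnorm normc_def /= -sqrtrM ?addr_ge0 ?sqr_ge0 //; congr Num.sqrt.
rewrite hipZl hipZr hip_self.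
by case: a => x y /=; simpc; ring.
Qed.

Lemma hnorm_distC u v : hnorm (u - v) = hnorm (v - u).
Proof.
have := hnormZ (-1) (v - u); rewrite scaleN1r opprB normrN normr1 => ->.
exact: mul1r.
Qed.

Lemma Re_hip_le u v : complex.Re (hip u v) <= hnorm u * hnorm v.
Proof.
have [->|v0] := eqVneq v 0; first by rewrite hip0r hnorm0 mulr0.
have vp : 0 < hnorm v ^+ 2 by rewrite exprn_gt0 // hnorm_gt0.
set r := complex.Re (hip u v); set q := hnorm v ^+ 2 in vp *.
have := sqr_ge0 (hnorm (u + (- (r / q))%:C%C *: v)).
rewrite hnorm_sqrDZ -/q.
have -> : hnorm u ^+ 2 + 2 * - (r / q) * r + (- (r / q)) ^+ 2 * q =
    hnorm u ^+ 2 - r ^+ 2 / q.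
  by field; rewrite gt_eqF.
rewrite subr_ge0 ler_pdivrMr // => r2.
apply: le_trans (ler_norm r) _.
rewrite -(@ler_pXn2r _ 2) ?nnegrE ?mulr_ge0 ?hnorm_ge0 //.
by rewrite real_normK ?num_real // exprMn.
Qed.

Lemma ler_hnormD u v : hnorm (u + v) <= hnorm u + hnorm v.
Proof.
rewrite -(@ler_pXn2r _ 2) ?nnegrE ?addr_ge0 ?hnorm_ge0 //.
have := hnorm_sqrDZ u v 1; rewrite scale1r expr1n mul1r mulr1 => ->.
have := Re_hip_le u v; lra.
Qed.

Lemma hnorm_sum (I : Type) (s : seq I) (f : I -> H) :
  hnorm (\sum_(i <- s) f i) <= \sum_(i <- s) hnorm (f i).
Proof.
elim: s => [|i s IH]; first by rewrite !big_nil hnorm0.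
by rewrite !big_cons (le_trans (ler_hnormD _ _)) // lerD2l.
Qed.

End HilbertSpace.

Section ComplexModulus.
Variable R : realType.
Implicit Type c : R[i].

Lemma Re_norm_ge0 c : 0 <= complex.Re `|c|.
Proof. by rewrite normc_def sqrtr_ge0. Qed.

Lemma Re_norm_real (r : R) : complex.Re `|r%:C%C| = `|r|.
Proof. by rewrite normc_def /= expr0n addr0 sqrtr_sqr. Qed.

Lemma Re_norm_le c : complex.Re `|c| <= `|complex.Re c| + `|complex.Im c|.
Proof.
rewrite -(@ler_pXn2r _ 2) ?nnegrE ?Re_norm_ge0 ?addr_ge0 //.
rewrite normc_def /= sqr_sqrtr ?addr_ge0 ?sqr_ge0 // sqrrD !real_normK ?num_real //.
by rewrite lerD2r lerDl mulrn_wge0 // mulr_ge0.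
Qed.

End ComplexModulus.

Lemma C0_compact_support (R : realType) (X : topologicalType) (a : X -> R) (C : set X) :
  continuous a -> compact C -> (forall y, a y != 0 -> C y) ->
  C0 R X (fun y => (a y)%:C%C).
Proof.
move=> ac cC aC; split; first exact: ac.
split; first by move=> x; exact: cst_continuous.
move=> e e0; exists C => // y nCy; rewrite Re_norm_real.
by have [->|/aC //] := eqVneq (a y) 0; rewrite normr0.
Qed.

Section ContinuousSections.
Variables (R : realType) (X : topologicalType) (F : cfield R X).
Local Notation sec := (forall x : X, fib F x).
Implicit Types (m n s t : sec) (c : R[i]).

Lemma csecB s t : csec s -> csec t -> csec (fun x => s x - t x).
Proof.
move=> cs ct; have -> : (fun x => s x - t x) = (fun x => s x + (-1) *: t x).
  by apply: functional_extensionality_dep => x; rewrite scaleN1r.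
by apply: csec_add => //; exact: csec_scale.
Qed.

Lemma open_hnorm_lt s (e : R) : csec s -> open [set x | hnorm (s x) < e].
Proof.
move=> cs; have sc := csec_normcont cs.
have := open_comp (fun x _ => sc x) (@open_lt R e); exact.
Qed.

Lemma open_hnorm_gt0 s : csec s -> open [set x | s x != 0].
Proof.
move=> cs; have sc := csec_normcont cs.
have -> : [set x | s x != 0] = [set x | 0 < hnorm (s x)].
  by apply/seteqP; split => x /=; rewrite hnorm_gt0.
have := open_comp (fun x _ => sc x) (@open_gt R 0); exact.
Qed.

Lemma C0sec0 : C0sec F (fun x => 0).
Proof.
split; first exact: csec_zero.
by move=> e e0; exists set0 => [|x _]; rewrite ?hnorm0 //; exact: compact0.
Qed.

Lemma C0secD m n : C0sec F m -> C0sec F n -> C0sec F (fun x => m x + n x).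
Proof.
move=> [cm vm] [cn vn]; split; first exact: csec_add.
move=> e e0; have e2 : 0 < e / 2 by rewrite divr_gt0.
have [Km cKm hm] := vm _ e2; have [Kn cKn hn] := vn _ e2.
exists (Km `|` Kn); first exact: compactU.
move=> y /not_orP[/hm my /hn ny] /=; apply: (le_lt_trans (ler_hnormD _ _)); lra.
Qed.

Lemma C0secZ c m : C0sec F m -> C0sec F (fun x => c *: m x).
Proof.
move=> [cm vm]; split; first exact: csec_scale.
move=> e e0; have c1 : 0 < complex.Re `|c| + 1 by rewrite ltr_wpDl // Re_norm_ge0.
have [K cK hK] := vm (e / (complex.Re `|c| + 1)) (divr_gt0 e0 c1).
exists K => // y /hK /=; rewrite hnormZ ltr_pdivlMr // => my.
by apply: le_lt_trans my; rewrite mulrDr mulr1 [hnorm _ * _]mulrC lerDl hnorm_ge0.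
Qed.

Lemma C0sec_act m b : C0sec F m -> C0 R X b -> C0sec F (fun x => b x *: m x).
Proof.
move=> [cm vm] [cRe [cIm vb]]; split.
  apply: csec_local => x e e0.
  (* near x, b *: m is uniformly close to the continuous section b x *: m *)
  exists (fun y => b x *: m y); first exact: csec_scale.
  pose M := hnorm (m x) + 1; pose d := e / (2 * M).
  have M0 : 0 < M by rewrite ltr_wpDl // hnorm_ge0.
  have d0 : 0 < d by rewrite divr_gt0 // mulr_gt0.
  have eE : e = 2 * d * M by rewrite /d; field; rewrite gt_eqF.
  have mc : continuous (fun y => hnorm (m y)) := csec_normcont cm.
  have nm : \forall y \near x, `|hnorm (m x) - hnorm (m y)| < 1.
    by apply: cvgr_dist_lt; [exact: mc|exact: ltr01].
  have nRe : \forall y \near x, `|complex.Re (b x) - complex.Re (b y)| < d.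
    by apply: cvgr_dist_lt; [exact: cRe|exact: d0].
  have nIm : \forall y \near x, `|complex.Im (b x) - complex.Im (b y)| < d.
    by apply: cvgr_dist_lt; [exact: cIm|exact: d0].
  apply: filterS (filterI nm (filterI nRe nIm)) => y [/ltr_distlCDr my [bRe bIm]].
  have bd : complex.Re `|b y - b x| < 2 * d.
    apply: le_lt_trans (Re_norm_le _) _.
    have -> : complex.Re (b y - b x) = complex.Re (b y) - complex.Re (b x).
      by case: (b y) => ? ?; case: (b x).
    have -> : complex.Im (b y - b x) = complex.Im (b y) - complex.Im (b x).
      by case: (b y) => ? ?; case: (b x).
    by rewrite distrC [X in _ + X]distrC; lra.
  rewrite -scalerBl hnormZ eE (@le_lt_trans _ _ (complex.Re `|b y - b x| * M)) //.
    by rewrite ler_wpM2l ?Re_norm_ge0 // ltW.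
  by rewrite ltr_pM2r.
move=> e e0; have [Kb cKb hb] := vb e e0; have [Km cKm hm] := vm 1 ltr01.
exists (Kb `|` Km); first exact: compactU.
move=> y /not_orP[/hb bny /hm my] /=; rewrite hnormZ.
have := Re_norm_ge0 (b y); have := hnorm_ge0 (m y); nra.
Qed.

Lemma submodule_sum (K : set sec) (I : Type) (r : seq I) (f : I -> sec) :
  submodule K -> (forall i, K (f i)) -> K (fun x => \sum_(i <- r) f i x).
Proof.
case=> _ K0 KD _ _ Kf; elim: r => [|i r IH].
  have -> : (fun x => \sum_(i <- [::]) f i x) = (fun x => 0) :> sec.
    by apply: functional_extensionality_dep => x; rewrite big_nil.
  exact: K0.
have -> : (fun x => \sum_(j <- i :: r) f j x) = (fun x => f i x + \sum_(j <- r) f j x) :> sec.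
  by apply: functional_extensionality_dep => x; rewrite big_cons.
exact: KD.
Qed.

Lemma fiber_closure_sec (N : set sec) n x : N n -> fiber_closure N x (n x).
Proof. by move=> Nn e e0; exists n; rewrite // subrr hnorm0. Qed.

End ContinuousSections.

(* [compact_cover] is stated for pointed spaces; a nonempty set supplies the point. *)
Definition pointed_at (T : topologicalType) (x : T) : Type := T.
HB.instance Definition _ (T : topologicalType) (x : T) :=
  Topological.copy (pointed_at x) T.
HB.instance Definition _ (T : topologicalType) (x : T) :=
  isPointed.Build (pointed_at x) x.

Lemma compact_cover_compact (T : topologicalType) (A : set T) :
  compact A -> cover_compact A.
Proof.
move=> cA; have [[x _]|A0] := pselect (A !=set0).
  have : @cover_compact (pointed_at x) A by rewrite -compact_cover.
  exact.
by move=> I D f _ _; exists finmap.fset0 => // y Ay; case: A0; exists y.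
Qed.

Lemma nowhere_dense_open (X : topologicalType) (Y O : set X) :
  nowhere_dense Y -> open O -> O !=set0 -> exists2 x, O x & ~ closure Y x.
Proof.
move=> ndY oO [x Ox]; apply/exists2P/not_existsP => OY.
suff : interior (closure Y) x by rewrite ndY.
apply: filterS (open_nbhs_nbhs (conj oO Ox)) => y Oy.
by have /not_andP[//|/contrapT] := OY y.
Qed.

Section RealFunctions.
Variables (R : realType) (X : topologicalType).

Lemma max0_neq0 (t : R) : Num.max 0 t != 0 -> 0 < t.
Proof. by move=> h; rewrite ltNge; apply: contra h => /max_l ->. Qed.

Lemma continuous_max0_affine (f : X -> R) (c d : R) :
  continuous f -> continuous (fun y => Num.max 0 (c + d * f y)).
Proof.
move=> fc y; apply: (@continuous_max _ _ (fun=> 0) (fun y => c + d * f y)).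
  exact: cst_continuous.
apply: (@continuousD _ R^o _ (fun=> c) (fun y => d * f y)); first exact: cst_continuous.
by apply: (@continuousM _ _ (fun=> d) f); [exact: cst_continuous|exact: fc].
Qed.

Lemma continuous_sum (I : Type) (r : seq I) (f : I -> X -> R) :
  (forall i, continuous (f i)) -> continuous (fun x => \sum_(i <- r) f i x).
Proof.
move=> fc; elim: r => [|i r IH].
  have -> : (fun x => \sum_(i <- [::]) f i x) = (fun=> 0).
    by apply: funext => x; rewrite big_nil.
  by move=> x; exact: cst_continuous.
have -> : (fun x => \sum_(j <- i :: r) f j x) = (fun x => f i x + \sum_(j <- r) f j x).
  by apply: funext => x; rewrite big_cons.
move=> x; apply: (@continuousD _ R^o _ (f i) (fun x => \sum_(j <- r) f j x)).
  exact: fc.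
exact: IH.
Qed.

End RealFunctions.

Section LocallyCompactHausdorff.
Variables (R : realType) (X : topologicalType).
Hypotheses (hX : hausdorff_space X) (lcX : locally_compact [set: X]).

Lemma compact_support_bump (x : X) (U : set X) : open U -> U x ->
  exists a : X -> R, exists2 C : set X,
    [/\ continuous a, forall y, 0 <= a y <= 1 & a x = 1] &
    [/\ compact C, C `<=` U & forall y, a y != 0 -> C y].
Proof.
move=> oU Ux; have [P Px [cP clP]] := @lcX x I; rewrite withinET in Px.
pose W := U `&` interior P.
have oW : open W by apply: openI => //; exact: open_interior.
have Wx : W x by split => //; exact: Px.
have sep := @locally_compact_completely_regular X R lcX hX x (~` W)
  (open_closedC oW) (fun h => h Wx).
pose g : X -> R := Urysohn [set x] (~` W).
have gc : continuous g := @Urysohn_continuous X R _ _.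
have g01 y : 0 <= g y <= 1.
  by have := @Urysohn_range X R [set x] (~` W) (g y) (ex_intro2 _ _ y I erefl).
have gx : g x = 0 by apply: (@Urysohn_sub0 X R _ _ sep); exists x.
have gW y : g y < 1 -> W y.
  move=> gy; apply: contrapT => Wy.
  by move: gy; rewrite (@Urysohn_sub1 X R _ _ sep (g y)) ?ltxx //; exists y.
exists (fun y => Num.max 0 (1 + (-2) * g y)), ([set y | g y <= 2^-1] `&` P); split.
- exact: continuous_max0_affine.
- by move=> y; have /andP[? ?] := g01 y; rewrite le_max lexx ge_max ler01 /=; lra.
- by rewrite gx mulr0 addr0 max_r ?ler01.
- apply: (subclosed_compact _ cP) => [|y []//]; apply: closedI => //.
  exact: (preimage_closed (fun y _ => gc y) (@closed_le R 2^-1)).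
- by move=> y [/= gy _]; have [] : W y by apply: gW; lra.
- move=> y /max0_neq0 ay; have gy : g y <= 2^-1 by lra.
  by split=> //; have [_ /interior_subset] : W y by apply: gW; lra.
Qed.

Lemma compact_partition_of_unity (a : X -> R) (C : set X) (g : X -> X -> R) :
  continuous a -> (forall z, 0 <= a z) -> compact C -> (forall z, a z != 0 -> C z) ->
  (forall y, continuous (g y)) -> (forall y, C y -> g y y = 1) ->
  exists (D : seq X) (phi : X -> X -> R),
    [/\ forall y, continuous (phi y), forall y z, 0 <= phi y z,
        forall y z, phi y z != 0 -> C z /\ g y z != 0
      & forall z, \sum_(y <- D) phi y z = a z].
Proof.
move=> ac a0 cC aC gc gyy.
have [D0 _ coverD] : finite_subset_cover C (fun y => [set z | 2^-1 < g y z]) C.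
  apply: compact_cover_compact => // [y _|z Cz].
    exact: (open_comp (fun z _ => gc y z) (@open_gt R 2^-1)).
  by exists z => //=; rewrite gyy // invf_lt1 // ltr1n.
pose D := finmap.enum_fset D0.
pose h y z := Num.max 0 (- 2^-1 + 1 * g y z).
have hc y : continuous (h y) by apply: continuous_max0_affine.
have h0 y z : 0 <= h y z by rewrite le_max lexx.
have hg y z : h y z != 0 -> 2^-1 < g y z by move=> /max0_neq0; lra.
pose s z := \sum_(y <- D) h y z.
have sC z : C z -> 0 < s z.
  move=> Cz; have [y Dy /= gyz] := coverD z Cz.
  rewrite lt0r sumr_ge0 // andbT psumr_neq0 //; apply/hasP; exists y => //.
  by rewrite /= /h lt_max; apply/orP; right; lra.
have clC : closed C := compact_closed hX cC.
have a_out z : ~ C z -> a z = 0 by move=> nCz; apply: contrapT => /eqP /aC.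
exists D, (fun y z => a z * h y z / s z); split.
- move=> y z; have [Cz|nCz] := pselect (C z).
    apply: (@continuousM _ _ (fun z => a z * h y z) (fun z => (s z)^-1)).
      by apply: (@continuousM _ _ a (h y)); [exact: ac|exact: hc].
    by apply: continuousV; [rewrite gt_eqF // sC|exact: continuous_sum].
  rewrite /continuous_at a_out // !mul0r.
  apply: cvg_trans (near_eq_cvg (f := fun=> 0) _) (cvg_cst _).
  apply: filterS (open_nbhs_nbhs (conj (closed_openC clC) nCz)) => w nCw.
  by rewrite a_out // !mul0r.
- by move=> y z; rewrite divr_ge0 ?mulr_ge0 // sumr_ge0.
- move=> y z; have [Cz|/a_out ->] := pselect (C z); last by rewrite !mul0r eqxx.
  rewrite !mulf_eq0 !negb_or => /andP[/andP[_ /hg gyz] _].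
  by split => //; rewrite gt_eqF // (lt_trans _ gyz).
- move=> z; have [Cz|/a_out az] := pselect (C z).
    by rewrite -mulr_suml -mulr_sumr mulfK // gt_eqF // sC.
  by rewrite big1 // => y _; rewrite az !mul0r.
Qed.

End LocallyCompactHausdorff.

Section EssentialSubmodules.
Variables (R : realType) (X : topologicalType) (F : cfield R X).
Hypotheses (hX : hausdorff_space X) (lcX : locally_compact [set: X]).
Local Notation sec := (forall x : X, fib F x).

Lemma fiber_closure_local_approx (N : set sec) (k : sec) (y : X) (e : R) :
  submodule N -> csec k -> fiber_closure N y (k y) -> 0 < e ->
  exists2 n, N n & exists g : X -> R,
    [/\ continuous g, g y = 1 & forall z, g z != 0 -> hnorm (n z - k z) < e].
Proof.
move=> [NC0 _ _ _ _] ck kyL e0.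
have [n Nn nky] := kyL e e0; have [cn _] := NC0 n Nn.
have [g [C [gc _ gy] [_ CO gC]]] :=
  compact_support_bump R hX lcX (open_hnorm_lt e (csecB cn ck)) nky.
by exists n => //; exists g; split => // z /gC /CO.
Qed.

Lemma approx_fiber_closure (N : set sec) (k : sec) (a : X -> R) (C : set X) :
  submodule N -> csec k -> continuous a -> (forall y, 0 <= a y <= 1) ->
  compact C -> (forall y, a y != 0 -> C y) ->
  (forall y, C y -> fiber_closure N y (k y)) ->
  forall e : R, 0 < e -> exists2 n, N n & forall y, hnorm ((a y)%:C%C *: k y - n y) <= e.
Proof.
move=> sN ck ac a01 cC aC kL e e0; have [_ N0 _ _ Nact] := sN.
have local y : exists ng : sec * (X -> R), [/\ N ng.1, continuous ng.2,
    C y -> ng.2 y = 1 & forall z, ng.2 z != 0 -> hnorm (ng.1 z - k z) < e].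
  have [Cy|nCy] := pselect (C y); last first.
    exists ((fun _ => 0), (fun _ => 0)); split => //= [z|z]; last by rewrite eqxx.
    exact: cst_continuous.
  have [n Nn [g [gc gy gn]]] := fiber_closure_local_approx sN ck (kL y Cy) e0.
  by exists (n, g).
have [ng hng] := choice local.
have gc y : continuous (ng y).2 by case: (hng y).
have gy1 y : C y -> (ng y).2 y = 1 by case: (hng y).
have a0 z : 0 <= a z by case/andP: (a01 z).
have [D [phi [phic phi0 phiC sum_phi]]] :=
  compact_partition_of_unity hX ac a0 cC aC gc gy1.
exists (fun z => \sum_(y <- D) (phi y z)%:C%C *: (ng y).1 z).
  apply: submodule_sum => // y; apply: Nact; first by case: (hng y).
  by apply: (C0_compact_support (phic y) cC) => z /phiC [].
move=> z; have -> : (a z)%:C%C *: k z - \sum_(y <- D) (phi y z)%:C%C *: (ng y).1 z =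
    \sum_(y <- D) (phi y z)%:C%C *: (k z - (ng y).1 z).
  rewrite -sum_phi rmorph_sum scaler_suml -sumrB.
  by apply: eq_bigr => y _; rewrite scalerBr.
apply: le_trans (hnorm_sum _ _) _.
apply: (@le_trans _ _ (\sum_(y <- D) phi y z * e)).
  apply: ler_sum => y _; rewrite hnormZ Re_norm_real ger0_norm // hnorm_distC.
  have [->|/phiC [_ gyz]] := eqVneq (phi y z) 0; first by rewrite !mul0r.
  by rewrite ler_wpM2l // ltW //; case: (hng y) => _ _ _; apply.
by rewrite -mulr_suml sum_phi ler_piMl ?(ltW e0) //; case/andP: (a01 z).
Qed.

Definition multiples_on (U : set X) (m : sec) : set sec :=
  [set k | [/\ C0sec F k, (forall y, ~ U y -> k y = 0) &
               forall y, exists c : R[i], k y = c *: m y]].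

Lemma submodule_multiples_on U m : submodule (multiples_on U m).
Proof.
split.
- by move=> k [].
- split; [exact: C0sec0|by []|by move=> y; exists 0; rewrite scale0r].
- move=> k1 k2 [C1 z1 s1] [C2 z2 s2]; split; first exact: C0secD.
    by move=> y nU; rewrite z1 // z2 // addr0.
  move=> y; have [c1 ->] := s1 y; have [c2 ->] := s2 y.
  by exists (c1 + c2); rewrite scalerDl.
- move=> c k1 [C1 z1 s1]; split; first exact: C0secZ.
    by move=> y nU; rewrite z1 // scaler0.
  by move=> y; have [c1 ->] := s1 y; exists (c * c1); rewrite scalerA.
- move=> k1 b [C1 z1 s1] Cb; split; first exact: C0sec_act.
    by move=> y nU; rewrite z1 // scaler0.
  by move=> y; have [c1 ->] := s1 y; exists (b y * c1); rewrite scalerA.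
Qed.

Lemma essential_nowhere_dense (N : set sec) : submodule N -> essential N ->
  forall m, C0sec F m -> nowhere_dense [set x | ~ fiber_closure N x (m x)].
Proof.
move=> sN ess m Cm; have [_ N0 _ NZ _] := sN; set Y := [set x | _].
rewrite /nowhere_dense -subset0 => x; rewrite /interior nbhsE => -[U [oU Ux] UY].
have [x0 [Yx0 Ux0]] := UY x Ux U (open_nbhs_nbhs (conj oU Ux)).
have mx0 : m x0 != 0.
  by apply/eqP => m0; apply: Yx0; rewrite m0; exact: (fiber_closure_sec x0 N0).
have [a [C [ac _ ax0] [cC CU aC]]] := compact_support_bump R hX lcX oU Ux0.
have C0a := C0_compact_support ac cC aC.
have [k [Nk [[ck _] kU km] [x1 kx1]]] :
    exists k, [/\ N k, multiples_on U m k & exists x, k x != 0].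
  apply: ess; first exact: submodule_multiples_on.
  exists (fun y => (a y)%:C%C *: m y); last by exists x0; rewrite ax0 rmorph1 scale1r.
  split; [exact: C0sec_act| |by move=> y; exists (a y)%:C%C].
  by move=> y nUy; have [->|/aC /CU //] := eqVneq (a y) 0; rewrite rmorph0 scale0r.
have Ux1 : U x1 by apply: contrapT => /kU; apply/eqP.
have [y [Yy [Uy ky]]] := UY x1 Ux1 _
  (open_nbhs_nbhs (conj (openI oU (open_hnorm_gt0 ck)) (conj Ux1 kx1))).
apply: Yy; have [c kyc] := km y.
have c0 : c != 0 by apply: contraNneq ky => c0; rewrite kyc c0 scale0r.
have -> : m y = c^-1 *: k y by rewrite kyc scalerA mulVf // scale1r.
exact: (fiber_closure_sec y (NZ _ _ Nk)).
Qed.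

Lemma nowhere_dense_essential (N : set sec) : closed_submodule N ->
  (forall m, C0sec F m -> nowhere_dense [set x | ~ fiber_closure N x (m x)]) ->
  essential N.
Proof.
move=> [sN Ncl] nd K [KC0 _ _ _ Kact] [k Kk [x0 kx0]].
have Ck := KC0 k Kk; have [ck _] := Ck.
set Y := [set x | ~ fiber_closure N x (k x)].
have [x1 kx1 nYx1] := nowhere_dense_open (nd k Ck) (open_hnorm_gt0 ck) (ex_intro _ x0 kx0).
have oV : open ([set x | k x != 0] `&` ~` closure Y).
  by apply: openI; [exact: open_hnorm_gt0|exact/closed_openC/closed_closure].
have [a [C [ac a01 ax1] [cC CV aC]]] := compact_support_bump R hX lcX oV (conj kx1 nYx1).
have Kak := Kact _ _ Kk (C0_compact_support ac cC aC).
exists (fun y => (a y)%:C%C *: k y); split => //; last first.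
  by exists x1; rewrite ax1 rmorph1 scale1r.
apply: Ncl; first exact: KC0.
apply: (approx_fiber_closure (C := C)) => // y /CV [_ nYy].
by apply: contrapT => ?; apply: nYy; exact: subset_closure.
Qed.

End EssentialSubmodules.

Theorem mainTheorem5 (R : realType) (X : topologicalType)
  (hX : hausdorff_space X) (lcX : locally_compact [set: X])
  (F : cfield R X) (N : set (forall x, fib F x)) (hN : closed_submodule N) :
  essential N <->
  (forall m, C0sec F m ->
     nowhere_dense [set x | ~ fiber_closure N x (m x)]).
Proof.
split; last exact: nowhere_dense_essential.
by apply: essential_nowhere_dense => //; case: hN.
Qed.
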